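(* Assume the setting and algorithm described in the context, with any step-size $\alpha>0$. Let $\beta>0$ be arbitrary and $\theta:=1-\frac1m+\alpha\beta+\frac{2\alpha^2L^2}{n}$. Then for all $k\ge0$, almost surely, $$\mathbb E\big[t^{k+1}\,|\,\mathcal F^k\big]\le\theta\,t^k+\Big(2\alpha^2+\frac\alpha\beta\Big)\|\overline{\nabla\mathbf f}(x^k)\|^2+\Big(\frac{2\alpha^2L^2}{n}+\frac2m\Big)\frac1n\|x^k-Jx^k\|^2 .$$
   Context: Setting. Let $n,m,p\ge1$ be integers and $\mathcal V=\{1,\dots,n\}$. For each $i\in\mathcal V$ and $j\in\{1,\dots,m\}$, $f_{i,j}:\mathbb R^p\to\mathbb R$ is differentiable and $L$-smooth for some $L>0$, i.e. $\|\nabla f_{i,j}(x)-\nabla f_{i,j}(y)\|\le L\|x-y\|$ for all $x,y\in\mathbb R^p$. Let $f_i:=\frac1m\sum_{j=1}^m f_{i,j}$ and $F:=\frac1n\sum_{i=1}^n f_i$, and assume $F^*:=\inf_{x\in\mathbb R^p}F(x)>-\infty$. Let $\underline W=(\underline w_{ir})\in\mathbb R^{n\times n}$ be a nonnegative, primitive, doubly stochastic matrix ($\underline W\mathbf 1_n=\mathbf 1_n$, $\mathbf 1_n^\top\underline W=\mathbf 1_n^\top$), and let $\lambda\in[0,1)$ be its second largest singular value. Any expression with $\lambda$ in a denominator is read as $+\infty$ when $\lambda=0$. Algorithm GT-SAGA with step-size $\alpha>0$: fix a deterministic $\bar x^0\in\mathbb R^p$; for all $i\in\mathcal V$ set $x_i^0=\bar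 x^0$, $z_{i,j}^0=x_i^0$ for all $j$, $y_i^0=0$, $g_i^{-1}=0$. For $k=0,1,2,\dots$ and every $i\in\mathcal V$: draw $\tau_i^k$ uniformly from $\{1,\dots,m\}$; set $g_i^k=\nabla f_{i,\tau_i^k}(x_i^k)-\nabla f_{i,\tau_i^k}(z_{i,\tau_i^k}^k)+\frac1m\sum_{j=1}^m\nabla f_{i,j}(z_{i,j}^k)$; set $y_i^{k+1}=\sum_{r=1}^n\underline w_{ir}(y_r^k+g_r^k-g_r^{k-1})$; set $x_i^{k+1}=\sum_{r=1}^n\underline w_{ir}(x_r^k-\alpha y_r^{k+1})$; draw $s_i^k$ uniformly from $\{1,\dots,m\}$; set $z_{i,j}^{k+1}=x_i^k$ if $j=s_i^k$ and $z_{i,j}^{k+1}=z_{i,j}^k$ otherwise. The family $\{\tau_i^k,s_i^k: i\in\mathcal V,k\ge0\}$ is independent. Notation. $x^k,y^k,g^k\in\mathbb R^{np}$ stack the $x_i^k$, $y_i^k$, $g_i^k$; $\nabla\mathbf f(x^k)\in\mathbb R^{np}$ stacks $\nabla f_i(x_i^k)$, $i=1,\dots,n$; $W=\underline W\otimes I_p$, $J=(\frac1n\mathbf 1_n\mathbf 1_n^\top)\otimes I_p$; $\bar x^k=\frac1n\sum_i x_i^k$, $\bar g^k=\frac1n\sum_i g_i^k$, $\overline{\nabla\mathbf f}(x^k)=\frac1n\sum_i\nabla f_i(x_i^k)$. $\mathcal F^0$ is the trivial $\sigma$-algebra and $\mathcal F^k=\sigma(\{\tau_i^t,s_i^t:i\in\mathcal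 V,\ t\le k-1\})$ for $k\ge1$. $t^k:=\frac1n\sum_{i=1}^n\frac1m\sum_{j=1}^m\|\bar x^k-z_{i,j}^k\|^2$. $\|\nabla\mathbf f(x^0)\|^2:=\sum_{i=1}^n\|\nabla f_i(\bar x^0)\|^2$. Norms are Euclidean (spectral for matrices); vector and matrix inequalities are entrywise. *)

From HB Require Import structures.
From mathcomp Require Import all_boot all_order all_algebra.
From mathcomp Require Import all_classical all_reals all_analysis.
Set Implicit Arguments. Unset Strict Implicit. Unset Printing Implicit Defensive.
Import Order.TTheory GRing.Theory Num.Theory.
Import numFieldNormedType.Exports.
Local Open Scope ring_scope.

Section GTSAGA.
Variables (R : realType) (n m p : nat).

Definition sqnorm (v : 'rV[R]_p) : R := \sum_(j < p) (v 0 j) ^+ 2.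
Definition enorm (v : 'rV[R]_p) : R := Num.sqrt (sqnorm v).

Definition grad (f : 'rV[R]_p -> R) (x : 'rV[R]_p) : 'rV[R]_p :=
  \row_(j < p) ('d f x (delta_mx 0 j : 'rV[R]_p)).

Definition Lsmooth (L : R) (f : 'rV[R]_p -> R) : Prop :=
  (forall x, differentiable f x) /\
  forall x y, enorm (grad f x - grad f y) <= L * enorm (x - y).

Definition fi (f : 'I_n -> 'I_m -> 'rV[R]_p -> R) (i : 'I_n) (x : 'rV[R]_p) : R :=
  m%:R^-1 * \sum_(j < m) f i j x.

Definition Fobj (f : 'I_n -> 'I_m -> 'rV[R]_p -> R) (x : 'rV[R]_p) : R :=
  n%:R^-1 * \sum_(i < n) fi f i x.

Definition doubly_stochastic_nonneg (W : 'M[R]_n) : Prop :=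
  (forall i j, 0 <= W i j) /\
  (forall i, \sum_(r < n) W i r = 1) /\
  (forall r, \sum_(i < n) W i r = 1).

Definition primitive_mx (W : 'M[R]_n) : Prop :=
  exists k : nat, forall i j, 0 < (W ^+ k) i j.

(* State of GT-SAGA at iteration k: x^k, y^k, g^{k-1}, z^k_{i,j} *)
Record state := State {
  st_x : 'I_n -> 'rV[R]_p;
  st_y : 'I_n -> 'rV[R]_p;
  st_gprev : 'I_n -> 'rV[R]_p;
  st_z : 'I_n -> 'I_m -> 'rV[R]_p }.

Definition init_state (x0 : 'rV[R]_p) : state :=
  State (fun _ => x0) (fun _ => 0) (fun _ => 0) (fun _ _ => x0).

Definition gsaga (f : 'I_n -> 'I_m -> 'rV[R]_p -> R) (st : state)
  (tau : 'I_n -> 'I_m) (i : 'I_n) : 'rV[R]_p :=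
  grad (f i (tau i)) (st_x st i) - grad (f i (tau i)) (st_z st i (tau i))
  + m%:R^-1 *: \sum_(j < m) grad (f i j) (st_z st i j).

Definition step (f : 'I_n -> 'I_m -> 'rV[R]_p -> R) (W : 'M[R]_n) (alpha : R)
  (st : state) (tau s : 'I_n -> 'I_m) : state :=
  let g := gsaga f st tau in
  let y' := fun i => \sum_(r < n) W i r *: (st_y st r + g r - st_gprev st r) in
  let x' := fun i => \sum_(r < n) W i r *: (st_x st r - alpha *: y' r) in
  let z' := fun i j => if j == s i then st_x st i else st_z st i j in
  State x' y' g z'.

Fixpoint iterate (f : 'I_n -> 'I_m -> 'rV[R]_p -> R) (W : 'M[R]_n) (alpha : R)
  (x0 : 'rV[R]_p) (tau s : nat -> 'I_n -> 'I_m) (k : nat) : state :=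
  match k with
  | 0 => init_state x0
  | k'.+1 => step f W alpha (iterate f W alpha x0 tau s k') (tau k') (s k')
  end.

Definition xbar (st : state) : 'rV[R]_p := n%:R^-1 *: \sum_(i < n) st_x st i.

Definition tk (st : state) : R :=
  n%:R^-1 * \sum_(i < n) (m%:R^-1 * \sum_(j < m) sqnorm (xbar st - st_z st i j)).

Definition consensus_err (st : state) : R :=
  \sum_(i < n) sqnorm (st_x st i - xbar st).

Definition avg_grad (f : 'I_n -> 'I_m -> 'rV[R]_p -> R) (st : state) : 'rV[R]_p :=
  n%:R^-1 *: \sum_(i < n) grad (fi f i) (st_x st i).

Definition upd (d : nat -> 'I_n -> 'I_m) (k : nat) (a : 'I_n -> 'I_m) :
  nat -> 'I_n -> 'I_m := fun t => if t == k then a else d t.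

(* E[X | F^k]: F^k is generated by the draws at times < k; the draws
   tau^t, s^t for t >= k are independent of F^k and uniform, so the
   conditional expectation of a quantity X is the average of X over the
   (uniform, independent) draws tau^k, s^k in ('I_m)^n x ('I_m)^n, the
   draws at times < k being those of the given outcome (tau, s).
   (Quantities used below depend only on draws at times <= k.) *)
Definition condE_k (k : nat) (X : (nat -> 'I_n -> 'I_m) -> (nat -> 'I_n -> 'I_m) -> R)
  (tau s : nat -> 'I_n -> 'I_m) : R :=
  ((m ^ n)%:R * (m ^ n)%:R)^-1 *
  \sum_(ta : {ffun 'I_n -> 'I_m}) \sum_(sa : {ffun 'I_n -> 'I_m})
     X (upd tau k ta) (upd s k sa).

End GTSAGA.

From HB Require Import structures.
From mathcomp Require Import all_boot all_order all_algebra.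
From mathcomp Require Import all_classical all_reals all_analysis.
From mathcomp Require Import ring lra.
Import Order.TTheory GRing.Theory Num.Theory.
Set Implicit Arguments. Unset Strict Implicit. Unset Printing Implicit Defensive.
Local Open Scope ring_scope.

(* Column-stochasticity of W preserves gradient tracking
   (sum_i y_i^k = sum_i g_i^{k-1}), so the mean iterate performs the SGD step
   xbar^{k+1} = xbar^k - alpha G with G = (1/n) sum_i g_i^k.  Conditioning on
   F^k is averaging one step over the fresh independent uniform draws
   tau^k, s^k.  Averaging over s^k, each table entry is refreshed to x_i^k
   with probability 1/m, which gives
     E_s t^{k+1} = (1/m) (C + alpha^2 ||G||^2)
                   + (1 - 1/m) (t^k - 2 alpha <d, G> + alpha^2 ||G||^2),
   C = ||x - Jx||^2 / n and d the mean of xbar - z_{i,j}.  Averaging over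
   tau^k, G is unbiased for avg_grad, and its variance is bounded, through
   L-smoothness, by (2L^2/n)(C + t^k).  Young's inequality on the cross term
   and scalar bookkeeping conclude. *)

Section EuclideanGeometry.
Variables (R : realType) (p : nat).
Implicit Types (u v w : 'rV[R]_p) (a b : R).

Definition dot u v : R := \sum_(c < p) u 0 c * v 0 c.

Lemma sqnorm_ge0 v : 0 <= sqnorm v.
Proof. by apply: sumr_ge0 => c _; apply: sqr_ge0. Qed.

Lemma sqnormE v : sqnorm v = dot v v.
Proof. by apply: eq_bigr => c _; rewrite expr2. Qed.

Lemma sqnormBC u v : sqnorm (u - v) = sqnorm (v - u).
Proof. by apply: eq_bigr => c _; rewrite !mxE; ring. Qed.

Lemma sqnormZ a v : sqnorm (a *: v) = a ^+ 2 * sqnorm v.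
Proof. by rewrite /sqnorm mulr_sumr; apply: eq_bigr => c _; rewrite mxE exprMn. Qed.

Lemma sqnormBZ u w a :
  sqnorm (u - a *: w) = sqnorm u - 2 * a * dot u w + a ^+ 2 * sqnorm w.
Proof.
rewrite /sqnorm /dot !mulr_sumr -sumrB -big_split /=.
by apply: eq_bigr => c _; rewrite !mxE; ring.
Qed.

Lemma sqnormD_le u v : sqnorm (u + v) <= 2 * sqnorm u + 2 * sqnorm v.
Proof.
rewrite /sqnorm !mulr_sumr -big_split /=; apply: ler_sum => c _; rewrite !mxE.
have := sqr_ge0 (u 0 c - v 0 c); nra.
Qed.

Lemma young u v a b : 0 < a -> 0 < b ->
  - (2 * a * dot u v) <= a * b * sqnorm u + a / b * sqnorm v.
Proof.
move=> a_gt0 b_gt0; rewrite /sqnorm /dot !mulr_sumr -sumrN -big_split /=.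
apply: ler_sum => c _; rewrite -subr_ge0 opprK.
have -> : a * b * u 0 c ^+ 2 + a / b * v 0 c ^+ 2 + 2 * a * (u 0 c * v 0 c)
          = a / b * (b * u 0 c + v 0 c) ^+ 2 by field; rewrite gt_eqF.
by rewrite mulr_ge0 ?sqr_ge0 ?divr_ge0 ?ltW.
Qed.

Lemma dot_sumr I (r : seq I) (P : pred I) u (F : I -> 'rV[R]_p) :
  dot u (\sum_(i <- r | P i) F i) = \sum_(i <- r | P i) dot u (F i).
Proof.
rewrite /dot exchange_big /=; apply: eq_bigr => c _.
by rewrite summxE mulr_sumr.
Qed.

Lemma dot_suml I (r : seq I) (P : pred I) u (F : I -> 'rV[R]_p) :
  dot (\sum_(i <- r | P i) F i) u = \sum_(i <- r | P i) dot (F i) u.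
Proof.
rewrite /dot exchange_big /=; apply: eq_bigr => c _.
by rewrite summxE mulr_suml.
Qed.

Lemma dotDr v u w : dot v (u + w) = dot v u + dot v w.
Proof. by rewrite /dot -big_split; apply: eq_bigr => c _; rewrite mxE mulrDr. Qed.

Lemma dot0l u : dot 0 u = 0.
Proof. by rewrite /dot big1 // => c _; rewrite mxE mul0r. Qed.

(* Centering decreases the sum of squares:
   sum_a ||u_a - mean u||^2 = sum_a ||u_a||^2 - ||sum_a u_a||^2 / k. *)
Lemma sqnorm_centered_le k (u : 'I_k -> 'rV[R]_p) : (0 < k)%N ->
  \sum_(a < k) sqnorm (u a - k%:R^-1 *: \sum_(b < k) u b) <= \sum_(a < k) sqnorm (u a).
Proof.
move=> k_gt0; have k0 : (k%:R : R) != 0 by rewrite pnatr_eq0 -lt0n.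
set S := \sum_(b < k) u b.
under eq_bigr => a _ do rewrite sqnormBZ.
rewrite !big_split /= sumrN -!mulr_sumr -dot_suml -/S -sqnormE sumr_const card_ord.
rewrite -[sqnorm S *+ k]mulr_natl -subr_ge0.
set Q := \sum_(a < k) sqnorm (u a).
have -> : Q - (Q - 2 * k%:R^-1 * sqnorm S + k%:R^-1 ^+ 2 * (k%:R * sqnorm S))
   = k%:R^-1 * sqnorm S by field.
by rewrite mulr_ge0 ?invr_ge0 ?ler0n ?sqnorm_ge0.
Qed.

Lemma sqnorm_le_of_enorm_le (L : R) u v : 0 < L ->
  enorm u <= L * enorm v -> sqnorm u <= L ^+ 2 * sqnorm v.
Proof.
move=> L_gt0 h.
rewrite -(sqr_sqrtr (sqnorm_ge0 u)) -(sqr_sqrtr (sqnorm_ge0 v)) -exprMn.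
by rewrite !expr2 ler_pM ?sqrtr_ge0.
Qed.

End EuclideanGeometry.

Section Averages.
Variable R : realType.

Definition avg k (u : 'I_k -> R) : R := k%:R^-1 * \sum_(i < k) u i.

Lemma avgD k (u v : 'I_k -> R) : avg (fun i => u i + v i) = avg u + avg v.
Proof. by rewrite /avg big_split mulrDr. Qed.

Lemma avgN k (u : 'I_k -> R) : avg (fun i => - u i) = - avg u.
Proof. by rewrite /avg sumrN mulrN. Qed.

Lemma avgZ k c (u : 'I_k -> R) : avg (fun i => c * u i) = c * avg u.
Proof. by rewrite /avg -mulr_sumr mulrCA. Qed.

Lemma avg_cst k c : (0 < k)%N -> avg (fun _ : 'I_k => c) = c.
Proof.
move=> k_gt0; rewrite /avg sumr_const card_ord -[c *+ k]mulr_natl mulrA mulVf ?mul1r //.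
by rewrite pnatr_eq0 -lt0n.
Qed.

Lemma avg_le k (u v : 'I_k -> R) : (forall i, u i <= v i) -> avg u <= avg v.
Proof. by move=> uv; rewrite ler_wpM2l ?invr_ge0 ?ler0n // ler_sum. Qed.

Lemma avg_ge0 k (u : 'I_k -> R) : (forall i, 0 <= u i) -> 0 <= avg u.
Proof. by move=> u_ge0; rewrite /avg mulr_ge0 ?invr_ge0 ?ler0n ?sumr_ge0. Qed.

Lemma avg_if k (j : 'I_k) (A B : R) : (0 < k)%N ->
  avg (fun c => if j == c then A else B) = k%:R^-1 * A + (1 - k%:R^-1) * B.
Proof.
move=> k_gt0; transitivity (avg (fun c => B + (A - B) * (j == c)%:R)).
  by congr avg; apply: funext => c; case: (j == c); rewrite ?mulr1 ?mulr0 ?addr0 // addrC subrK.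
rewrite avgD avg_cst // avgZ /avg (bigD1 j) //= eqxx big1 => [|c]; last first.
  by rewrite eq_sym => /negbTE->.
by rewrite addr0 mulr1; ring.
Qed.

End Averages.

Section UniformExpectation.
Variables (R : realType) (n m : nat).
Hypothesis m_gt0 : (0 < m)%N.
Implicit Types (phi psi : {ffun 'I_n -> 'I_m} -> R).

Definition Ef phi : R := ((m ^ n)%:R)^-1 * \sum_(ta : {ffun 'I_n -> 'I_m}) phi ta.

Lemma EfD phi psi : Ef (fun ta => phi ta + psi ta) = Ef phi + Ef psi.
Proof. by rewrite /Ef big_split mulrDr. Qed.

Lemma EfN phi : Ef (fun ta => - phi ta) = - Ef phi.
Proof. by rewrite /Ef sumrN mulrN. Qed.

Lemma EfZ c phi : Ef (fun ta => c * phi ta) = c * Ef phi.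
Proof. by rewrite /Ef -mulr_sumr mulrCA. Qed.

Lemma Ef_sum I (r : seq I) (P : pred I) (phi : I -> {ffun 'I_n -> 'I_m} -> R) :
  Ef (fun ta => \sum_(i <- r | P i) phi i ta) = \sum_(i <- r | P i) Ef (phi i).
Proof. by rewrite /Ef exchange_big mulr_sumr. Qed.

Lemma Ef_avg k (phi : 'I_k -> {ffun 'I_n -> 'I_m} -> R) :
  Ef (fun ta => avg (fun i => phi i ta)) = avg (fun i => Ef (phi i)).
Proof. by rewrite EfZ Ef_sum. Qed.

Lemma Ef_cst c : Ef (fun _ => c) = c.
Proof.
rewrite /Ef sumr_const card_ffun !card_ord -[c *+ _]mulr_natl mulrA mulVf ?mul1r //.
by rewrite pnatr_eq0 expn_eq0 negb_and -lt0n m_gt0.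
Qed.

Lemma Ef_prod (phi : 'I_n -> 'I_m -> R) :
  Ef (fun ta => \prod_(i < n) phi i (ta i)) = \prod_(i < n) avg (phi i).
Proof.
by rewrite /Ef -bigA_distr_bigA big_split /= prodr_const card_ord natrX exprVn.
Qed.

Lemma Ef_marginal (i : 'I_n) (F : 'I_m -> R) : Ef (fun ta => F (ta i)) = avg F.
Proof.
have avg1 : avg (fun _ : 'I_m => 1 : R) = 1 by exact: avg_cst.
have := Ef_prod (fun k a => if k == i then F a else 1).
rewrite (bigD1 i) //= eqxx big1 ?mulr1 => [<-|k /negbTE->//].
congr Ef; apply: funext => ta.
by rewrite (bigD1 i) //= eqxx big1 ?mulr1 // => k /negbTE->.
Qed.

Lemma Ef_pair (i i' : 'I_n) (F G : 'I_m -> R) : i != i' ->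
  Ef (fun ta => F (ta i) * G (ta i')) = avg F * avg G.
Proof.
move=> ii'; have i'i : i' != i by rewrite eq_sym.
have avg1 : avg (fun _ : 'I_m => 1 : R) = 1 by exact: avg_cst.
have := Ef_prod (fun k a => if k == i then F a else if k == i' then G a else 1).
rewrite (bigD1 i) //= (bigD1 i') //= !eqxx (negbTE i'i) /=.
rewrite big1 ?mulr1 => [<-|k /andP[/negbTE-> /negbTE->]//].
congr Ef; apply: funext => ta.
rewrite (bigD1 i) //= (bigD1 i') //= !eqxx (negbTE i'i) /=.
by rewrite big1 ?mulr1 // => k /andP[/negbTE-> /negbTE->].
Qed.

Lemma Ef_sqr_centered (d : R) (h : 'I_n -> 'I_m -> R) :
  (forall i, avg (h i) = 0) ->
  Ef (fun ta => (d + \sum_(i < n) h i (ta i)) ^+ 2) =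
  d ^+ 2 + \sum_(i < n) avg (fun a => h i a ^+ 2).
Proof.
move=> h_centered.
have mean0 : Ef (fun ta => \sum_(i < n) h i (ta i)) = 0.
  by rewrite Ef_sum big1 // => i _; rewrite Ef_marginal.
have second : Ef (fun ta => (\sum_(i < n) h i (ta i)) ^+ 2)
              = \sum_(i < n) avg (fun a => h i a ^+ 2).
  under eq_fun => ta do rewrite expr2 mulr_suml.
  rewrite Ef_sum; apply: eq_bigr => i _.
  under eq_fun => ta do rewrite mulr_sumr.
  rewrite Ef_sum (bigD1 i) //= big1 ?addr0 => [|i' i'i].
    by under eq_fun => ta do rewrite -expr2; rewrite (Ef_marginal i (fun a => h i a ^+ 2)).
  by rewrite (Ef_pair (h i) (h i')) 1?eq_sym // h_centered mul0r.
under eq_fun => ta do rewrite sqrrD mulr2n.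
by rewrite !EfD Ef_cst !EfZ mean0 mulr0 !addr0 second.
Qed.

Section Vectors.
Variable p : nat.

Lemma Ef_dot_centered (v : 'rV[R]_p) (h : 'I_n -> 'I_m -> 'rV[R]_p) :
  (forall i, \sum_(a < m) h i a = 0) ->
  Ef (fun ta => dot v (\sum_(i < n) h i (ta i))) = 0.
Proof.
move=> h_centered; under eq_fun => ta do rewrite dot_sumr.
rewrite Ef_sum big1 // => i _.
by rewrite (Ef_marginal i (fun a => dot v (h i a))) /avg -dot_sumr h_centered /dot
           big1 ?mulr0 // => c _; rewrite mxE mulr0.
Qed.

Lemma Ef_sqnorm_centered (D : 'rV[R]_p) (h : 'I_n -> 'I_m -> 'rV[R]_p) :
  (forall i, \sum_(a < m) h i a = 0) ->
  Ef (fun ta => sqnorm (D + \sum_(i < n) h i (ta i))) =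
  sqnorm D + \sum_(i < n) avg (fun a => sqnorm (h i a)).
Proof.
move=> h_centered; rewrite /sqnorm Ef_sum.
transitivity (\sum_(c < p) (D 0 c ^+ 2 + \sum_(i < n) avg (fun a => h i a 0 c ^+ 2))).
  apply: eq_bigr => c _.
  rewrite -(@Ef_sqr_centered (D 0 c) (fun i a => h i a 0 c)); last first.
    by move=> i; rewrite /avg -summxE h_centered mxE mulr0.
  by congr Ef; apply: funext => ta; rewrite mxE summxE.
rewrite big_split /= exchange_big /=; congr (_ + _); apply: eq_bigr => i _.
by rewrite /avg -mulr_sumr exchange_big.
Qed.

End Vectors.
End UniformExpectation.

Section GradientOfAverage.
Variables (R : realType) (p : nat).

Lemma diff_sum (I : Type) (r : seq I) (F : I -> 'rV[R]_p -> R) x v :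
  (forall j, differentiable (F j) x) ->
  'd (\sum_(j <- r) F j) x v = \sum_(j <- r) 'd (F j) x v.
Proof.
move=> dF; elim: r => [|a r IH].
  by rewrite !big_nil (_ : 0 = cst 0) // diff_cst.
have dS : differentiable (\sum_(j <- r) F j) x.
  by apply: (big_ind (fun g => differentiable g x)) => // g h dg dh; exact: differentiableD.
by rewrite !big_cons diffD //= IH.
Qed.

Lemma grad_fi n m (f : 'I_n -> 'I_m -> 'rV[R]_p -> R) i x :
  (forall j, differentiable (f i j) x) ->
  grad (fi f i) x = m%:R^-1 *: \sum_(j < m) grad (f i j) x.
Proof.
move=> df.
have -> : fi f i = m%:R^-1 *: \sum_(j < m) f i j.
  by apply: funext => y; rewrite /fi /= fct_sumE.
have dS : differentiable (\sum_(j < m) f i j) x by apply: differentiable_sum.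
apply/rowP => c; rewrite !mxE diffZ //= diff_sum // summxE.
by congr (_ * _); apply: eq_bigr => j _; rewrite mxE.
Qed.

End GradientOfAverage.

Section Dynamics.
Variables (R : realType) (n m p : nat).
Variables (f : 'I_n -> 'I_m -> 'rV[R]_p -> R) (W : 'M[R]_n) (alpha : R).
Variable x0 : 'rV[R]_p.

Lemma iterate_ext k (tau s tau' s' : nat -> 'I_n -> 'I_m) :
  (forall t, (t < k)%N -> tau t = tau' t) -> (forall t, (t < k)%N -> s t = s' t) ->
  iterate f W alpha x0 tau s k = iterate f W alpha x0 tau' s' k.
Proof.
elim: k => [//|k IH] htau hs /=.
by rewrite IH ?htau ?hs // => t /ltnW; [apply: htau | apply: hs].
Qed.

Lemma condE_k_step (X : state R n m p -> R) (tau s : nat -> 'I_n -> 'I_m) k :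
  condE_k k (fun tau' s' => X (iterate f W alpha x0 tau' s' k.+1)) tau s =
  Ef (fun ta => Ef (fun sa => X (step f W alpha (iterate f W alpha x0 tau s k) ta sa))).
Proof.
rewrite /condE_k /Ef invfM -mulrA mulr_sumr; congr (_ * _); apply: eq_bigr => ta _.
congr (_ * _); apply: eq_bigr => sa _ /=.
rewrite (@iterate_ext k (upd tau k ta) (upd s k sa) tau s) => [|t|t];
  by rewrite /upd ?eqxx // => /ltn_eqF->.
Qed.

Hypothesis W_col : forall r, \sum_(i < n) W i r = 1.

Lemma sum_mix (v : 'I_n -> 'rV[R]_p) :
  \sum_(i < n) \sum_(r < n) W i r *: v r = \sum_(r < n) v r.
Proof.
rewrite exchange_big /=; apply: eq_bigr => r _.
by rewrite -scaler_suml W_col scale1r.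
Qed.

Lemma tracking (tau s : nat -> 'I_n -> 'I_m) k :
  let st := iterate f W alpha x0 tau s k in
  \sum_(i < n) st_y st i = \sum_(i < n) st_gprev st i.
Proof.
elim: k => [|k IH] /=; first by rewrite !big1.
by rewrite sum_mix sumrB big_split IH addrAC subrr add0r.
Qed.

Definition sgrad (st : state R n m p) (ta : 'I_n -> 'I_m) : 'rV[R]_p :=
  n%:R^-1 *: \sum_(i < n) gsaga f st ta i.

Lemma xbar_step st ta sa :
  \sum_(i < n) st_y st i = \sum_(i < n) st_gprev st i ->
  xbar (step f W alpha st ta sa) = xbar st - alpha *: sgrad st ta.
Proof.
move=> track; rewrite /xbar /sgrad /step /=.
rewrite sum_mix sumrB -scaler_sumr sum_mix sumrB big_split track addrAC subrr add0r.
by rewrite scalerBr !scalerA mulrC.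
Qed.

End Dynamics.

Section RefreshAndShift.
Variables (R : realType) (n m p : nat).
Hypotheses (n_gt0 : (0 < n)%N) (m_gt0 : (0 < m)%N).

Lemma Ef_refresh (a : 'I_n -> R) (b : 'I_n -> 'I_m -> R) :
  Ef (fun sa : {ffun 'I_n -> 'I_m} =>
        avg (fun i => avg (fun j => if j == sa i then a i else b i j))) =
  m%:R^-1 * avg a + (1 - m%:R^-1) * avg (fun i => avg (b i)).
Proof.
rewrite Ef_avg; transitivity
  (avg (fun i => m%:R^-1 * a i + (1 - m%:R^-1) * avg (b i))); last by rewrite avgD !avgZ.
congr avg; apply: funext => i; rewrite Ef_avg.
under eq_fun => j do
  rewrite (Ef_marginal m_gt0 i (fun c => if j == c then a i else b i j)) avg_if //.
by rewrite avgD avg_cst // avgZ.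
Qed.

Variables (x : 'I_n -> 'rV[R]_p) (z : 'I_n -> 'I_m -> 'rV[R]_p).
Let xb : 'rV[R]_p := n%:R^-1 *: \sum_(i < n) x i.

(* Moving the mean by -alpha G shifts the consensus error by alpha^2 ||G||^2,
   since the deviations from the mean sum to zero. *)
Lemma shift_consensus (alpha : R) (G : 'rV[R]_p) :
  avg (fun i => sqnorm (xb - alpha *: G - x i)) =
  avg (fun i => sqnorm (x i - xb)) + alpha ^+ 2 * sqnorm G.
Proof.
have n0 : (n%:R : R) != 0 by rewrite pnatr_eq0 -lt0n.
under eq_fun => i do rewrite addrAC sqnormBZ sqnormBC.
have deviations0 : \sum_(i < n) (xb - x i) = 0.
  by rewrite sumrB sumr_const card_ord -scaler_nat scalerA mulfV // scale1r subrr.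
rewrite !avgD avgN avg_cst // avgZ /avg -dot_suml deviations0 dot0l.
by rewrite !mulr0 oppr0 addr0.
Qed.

Lemma shift_table (Y G : 'rV[R]_p) (alpha : R) :
  avg (fun i => avg (fun j => sqnorm (Y - alpha *: G - z i j))) =
  avg (fun i => avg (fun j => sqnorm (Y - z i j)))
  - 2 * alpha * avg (fun i => avg (fun j => dot (Y - z i j) G))
  + alpha ^+ 2 * sqnorm G.
Proof.
under eq_fun => i do under eq_fun => j do rewrite addrAC sqnormBZ.
under eq_fun => i do rewrite !avgD avgN avgZ avg_cst //.
by rewrite !avgD avgN avgZ avg_cst.
Qed.

End RefreshAndShift.

Section StochasticGradient.
Variables (R : realType) (n m p : nat).
Hypothesis m_gt0 : (0 < m)%N.
Variables (f : 'I_n -> 'I_m -> 'rV[R]_p -> R) (L : R).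
Hypotheses (L_gt0 : 0 < L) (f_smooth : forall i j, Lsmooth L (f i j)).
Variable st : state R n m p.

Definition saga_corr (i : 'I_n) (a : 'I_m) : 'rV[R]_p :=
  grad (f i a) (st_x st i) - grad (f i a) (st_z st i a).

Definition saga_corr_mean (i : 'I_n) : 'rV[R]_p :=
  m%:R^-1 *: \sum_(a < m) saga_corr i a.

Lemma saga_corr_centered i :
  \sum_(a < m) n%:R^-1 *: (saga_corr i a - saga_corr_mean i) = 0.
Proof.
have m0 : (m%:R : R) != 0 by rewrite pnatr_eq0 -lt0n.
rewrite -scaler_sumr sumrB sumr_const card_ord /saga_corr_mean.
by rewrite -[_ *+ m]scaler_nat scalerA mulfV // scale1r subrr scaler0.
Qed.

Lemma gsaga_decomp ta i :
  gsaga f st ta i = grad (fi f i) (st_x st i) + (saga_corr i (ta i) - saga_corr_mean i).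
Proof.
rewrite grad_fi; last by move=> j; case: (f_smooth i j).
rewrite /gsaga /saga_corr_mean /saga_corr sumrB scalerBr.
by rewrite [RHS]addrC -[RHS]addrA opprB subrK.
Qed.

Lemma sgrad_decomp ta : sgrad f st ta =
  avg_grad f st + \sum_(i < n) n%:R^-1 *: (saga_corr i (ta i) - saga_corr_mean i).
Proof.
rewrite /sgrad /avg_grad -scaler_sumr -scalerDr -big_split /=.
by under eq_bigr => i _ do rewrite gsaga_decomp.
Qed.

Lemma sgrad_unbiased v :
  Ef (fun ta => dot v (sgrad f st ta)) = dot v (avg_grad f st).
Proof.
under eq_fun => ta do rewrite sgrad_decomp dotDr.
rewrite EfD Ef_cst // (@Ef_dot_centered _ _ _ m_gt0 _ v
  (fun i a => n%:R^-1 *: (saga_corr i a - saga_corr_mean i))) ?addr0 //.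
exact: saga_corr_centered.
Qed.

(* Second moment = squared mean + variance, and the variance of each node's
   estimator is at most the mean squared SAGA correction. *)
Lemma sgrad_second_moment :
  Ef (fun ta => sqnorm (sgrad f st ta)) <=
  sqnorm (avg_grad f st) + n%:R^-1 * avg (fun i => avg (fun a => sqnorm (saga_corr i a))).
Proof.
under eq_fun => ta do rewrite sgrad_decomp.
rewrite (@Ef_sqnorm_centered _ _ _ m_gt0 _ _
  (fun i a => n%:R^-1 *: (saga_corr i a - saga_corr_mean i))); last first.
  exact: saga_corr_centered.
rewrite lerD2l /avg mulrA mulr_sumr; apply: ler_sum => i _.
under eq_bigr => a _ do rewrite sqnormZ.
rewrite -mulr_sumr mulrCA -expr2 ler_wpM2l ?exprn_ge0 ?invr_ge0 ?ler0n //.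
by rewrite ler_wpM2l ?invr_ge0 ?ler0n // sqnorm_centered_le.
Qed.

Lemma saga_corr_bound :
  avg (fun i => avg (fun a => sqnorm (saga_corr i a))) <=
  2 * L ^+ 2 * (avg (fun i => sqnorm (st_x st i - xbar st))
                + avg (fun i => avg (fun a => sqnorm (xbar st - st_z st i a)))).
Proof.
set xb := xbar st.
apply: (@le_trans _ _ (avg (fun i => avg (fun a =>
   2 * L ^+ 2 * (sqnorm (st_x st i - xb) + sqnorm (xb - st_z st i a)))))).
  apply: avg_le => i; apply: avg_le => a.
  have [_ lipschitz] := f_smooth i a.
  apply: le_trans (sqnorm_le_of_enorm_le L_gt0 (lipschitz _ _)) _.
  have -> : st_x st i - st_z st i a = (st_x st i - xb) + (xb - st_z st i a).
    by rewrite addrA subrK.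
  have := sqnormD_le (st_x st i - xb) (xb - st_z st i a); have := sqr_ge0 L; nra.
under eq_fun => i do rewrite avgZ avgD avg_cst //.
by rewrite avgZ avgD.
Qed.

End StochasticGradient.

Lemma young_avg (R : realType) n m p (v : 'I_n -> 'I_m -> 'rV[R]_p) (D : 'rV[R]_p) (a b : R) :
  (0 < n)%N -> (0 < m)%N -> 0 < a -> 0 < b ->
  - (2 * a * avg (fun i => avg (fun j => dot (v i j) D))) <=
  a * b * avg (fun i => avg (fun j => sqnorm (v i j))) + a / b * sqnorm D.
Proof.
move=> n_gt0 m_gt0 a_gt0 b_gt0.
have <- : avg (fun i => avg (fun j => - (2 * a * dot (v i j) D))) =
          - (2 * a * avg (fun i => avg (fun j => dot (v i j) D))).
  by under eq_fun => i do rewrite avgN avgZ; rewrite avgN avgZ.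
have <- : avg (fun i => avg (fun j => a * b * sqnorm (v i j) + a / b * sqnorm D)) =
          a * b * avg (fun i => avg (fun j => sqnorm (v i j))) + a / b * sqnorm D.
  by under eq_fun => i do rewrite avgD avgZ avg_cst //; rewrite avgD avgZ avg_cst.
by do 2!apply: avg_le => ?; exact: young.
Qed.

(* The scalar bookkeeping closing the one-step estimate: q = 1/m, K = 2L^2/N. *)
Lemma one_step_arith (R : realType) (q a b L N T C SD ES A : R) :
  0 <= q <= 1 -> 0 < a -> 0 < b -> 0 <= N -> 0 <= T -> 0 <= C -> 0 <= SD ->
  - (2 * a * A) <= a * b * T + a / b * SD ->
  ES <= SD + 2 * L ^+ 2 / N * (C + T) ->
  q * (C + a ^+ 2 * ES) + (1 - q) * (T - 2 * a * A + a ^+ 2 * ES) <=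
  (1 - q + a * b + 2 * a ^+ 2 * L ^+ 2 / N) * T + (2 * a ^+ 2 + a / b) * SD
  + (2 * a ^+ 2 * L ^+ 2 / N + 2 * q) * C.
Proof.
move=> /andP[q_ge0 q_le1] a_gt0 b_gt0 N_ge0 T_ge0 C_ge0 SD_ge0 hA hES.
set K := 2 * L ^+ 2 / N.
have K_ge0 : 0 <= K by rewrite /K mulr_ge0 ?invr_ge0 // mulr_ge0 ?sqr_ge0.
have -> : 2 * a ^+ 2 * L ^+ 2 / N = a ^+ 2 * K by rewrite /K; ring.
have ab_ge0 : 0 <= a / b by rewrite divr_ge0 ?ltW.
have hA' : (1 - q) * (- (2 * a * A)) <= (1 - q) * (a * b * T + a / b * SD).
  by rewrite ler_wpM2l // subr_ge0.
have hES' : a ^+ 2 * ES <= a ^+ 2 * (SD + K * (C + T)) by rewrite ler_wpM2l ?sqr_ge0.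
have qabT : 0 <= q * (a * b * T) by rewrite mulr_ge0 // mulr_ge0 // mulr_ge0 // ltW.
have qabSD : 0 <= q * (a / b * SD) by rewrite mulr_ge0 // mulr_ge0.
have a2SD : 0 <= a ^+ 2 * SD by rewrite mulr_ge0 ?sqr_ge0.
have qC : 0 <= q * C by rewrite mulr_ge0.
lra.
Qed.

Section OneStepBound.
Variables (R : realType) (n m p : nat).
Hypotheses (n_gt0 : (0 < n)%N) (m_gt0 : (0 < m)%N).
Variables (f : 'I_n -> 'I_m -> 'rV[R]_p -> R) (L : R).
Hypotheses (L_gt0 : 0 < L) (f_smooth : forall i j, Lsmooth L (f i j)).
Variables (W : 'M[R]_n) (alpha beta : R).
Hypotheses (alpha_gt0 : 0 < alpha) (beta_gt0 : 0 < beta).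
Hypothesis W_col : forall r, \sum_(i < n) W i r = 1.
Variable st : state R n m p.
Hypothesis tracked : \sum_(i < n) st_y st i = \sum_(i < n) st_gprev st i.

Let align (v : 'rV[R]_p) : R :=
  avg (fun i => avg (fun j => dot (xbar st - st_z st i j) v)).

(* Averaging over s^k: t^{k+1} mixes the consensus error (refreshed entries)
   and the shifted t^k (kept entries). *)
Lemma tk_step_refresh (ta : 'I_n -> 'I_m) :
  let G := sgrad f st ta in
  Ef (fun sa => tk (step f W alpha st ta sa)) =
  m%:R^-1 * (n%:R^-1 * consensus_err st + alpha ^+ 2 * sqnorm G) +
  (1 - m%:R^-1) * (tk st - 2 * alpha * align G + alpha ^+ 2 * sqnorm G).
Proof.
move=> G; set Y := xbar st - alpha *: G.
transitivity (Ef (fun sa : {ffun 'I_n -> 'I_m} => avg (fun i => avg (fun j =>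
   if j == sa i then sqnorm (Y - st_x st i) else sqnorm (Y - st_z st i j))))).
  congr Ef; apply: funext => sa; rewrite /tk xbar_step //.
  rewrite /avg; congr (_ * _); apply: eq_bigr => i _; congr (_ * _).
  by apply: eq_bigr => j _ /=; case: (j == sa i).
by rewrite Ef_refresh // shift_consensus // shift_table.
Qed.

Lemma one_step_bound :
  Ef (fun ta => Ef (fun sa => tk (step f W alpha st ta sa))) <=
  (1 - m%:R^-1 + alpha * beta + 2 * alpha ^+ 2 * L ^+ 2 / n%:R) * tk st
  + (2 * alpha ^+ 2 + alpha / beta) * sqnorm (avg_grad f st)
  + (2 * alpha ^+ 2 * L ^+ 2 / n%:R + 2 / m%:R) * (n%:R^-1 * consensus_err st).
Proof.
under eq_fun => ta do rewrite tk_step_refresh.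
rewrite EfD 2!EfZ EfD EfD EfD EfN 2!EfZ !(Ef_cst n m_gt0).
have E_align : Ef (fun ta => align (sgrad f st ta)) = align (avg_grad f st).
  rewrite /align Ef_avg; congr avg; apply: funext => i.
  by rewrite Ef_avg; congr avg; apply: funext => j; exact: sgrad_unbiased.
rewrite E_align.
have hES : Ef (fun ta => sqnorm (sgrad f st ta)) <= sqnorm (avg_grad f st)
    + 2 * L ^+ 2 / n%:R * (n%:R^-1 * consensus_err st + tk st).
  apply: le_trans (sgrad_second_moment m_gt0 f_smooth st) _; rewrite lerD2l.
  apply: le_trans (ler_wpM2l _ (saga_corr_bound m_gt0 L_gt0 f_smooth st)) _.
    by rewrite invr_ge0 ler0n.
  by rewrite mulrA [n%:R^-1 * (2 * _)]mulrC lexx.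
apply: one_step_arith hES => //.
- by rewrite invr_ge0 ler0n invf_le1 ?ler1n ?ltr0n.
- by do 2!apply: avg_ge0 => ?; exact: sqnorm_ge0.
- by rewrite mulr_ge0 ?invr_ge0 ?ler0n ?sumr_ge0 // => i _; exact: sqnorm_ge0.
- exact: sqnorm_ge0.
- exact: young_avg.
Qed.

End OneStepBound.

Theorem lemma5 (R : realType) (n m p : nat)
  (f : 'I_n -> 'I_m -> 'rV[R]_p -> R) (L : R) (W : 'M[R]_n)
  (alpha beta : R) (x0 : 'rV[R]_p) :
  (0 < n)%N -> (0 < m)%N -> (0 < p)%N ->
  0 < L ->
  (forall i j, Lsmooth L (f i j)) ->
  (exists B : R, forall x, B <= Fobj f x) ->
  doubly_stochastic_nonneg W -> primitive_mx W ->
  0 < alpha -> 0 < beta ->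
  let theta := 1 - m%:R^-1 + alpha * beta + 2 * alpha ^+ 2 * L ^+ 2 / n%:R in
  forall (tau s : nat -> 'I_n -> 'I_m) (k : nat),
    condE_k k (fun tau' s' => tk (iterate f W alpha x0 tau' s' k.+1)) tau s
    <= theta * tk (iterate f W alpha x0 tau s k)
       + (2 * alpha ^+ 2 + alpha / beta)
           * sqnorm (avg_grad f (iterate f W alpha x0 tau s k))
       + (2 * alpha ^+ 2 * L ^+ 2 / n%:R + 2 / m%:R)
           * (n%:R^-1 * consensus_err (iterate f W alpha x0 tau s k)).
Proof.
move=> n_gt0 m_gt0 _ L_gt0 f_smooth _ [_ [_ W_col]] _ alpha_gt0 beta_gt0 theta tau s k.
rewrite condE_k_step; apply: one_step_bound => //.
exact: tracking.
Qed.
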